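(* Let $R_e\approx1.4877$ be the unique positive root of $\frac{10}{7(R+1)}-\frac{R^2\sqrt{R}}{R^2+R+1}=0$. Let $\tau_k>0$ be time-step sizes with ratios $r_k=\tau_k/\tau_{k-1}$ satisfying $0<r_k<R_e$ for all $k\ge2$. Then for every $n\ge3$ and all real numbers $\xi_3,\dots,\xi_n$, $$2\sum_{k=3}^n\xi_k\sum_{j=3}^k\tau_kd^{(k)}_{k-j}\xi_j\ge\frac{1}{50}\sum_{k=3}^n\tau_k\xi_k^2 .$$
   Context: For $x,y\ge0$ let $d_0(x,y)=\frac{1+2x}{1+x}+\frac{xy}{1+y+xy}$, $d_1(x,y)=-\frac{x}{1+x}-\frac{xy}{1+y+xy}-\frac{xy^2}{1+y+xy}\frac{1+x}{1+y}$, $d_2(x,y)=\frac{xy^2}{1+y+xy}\frac{1+x}{1+y}$. The BDF3 kernels are $d^{(k)}_j=d_j(r_k,r_{k-1})$ for $j=0,1,2$ and $d^{(k)}_j=0$ for $j\ge3$. *)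

From HB Require Import structures.
From mathcomp Require Import all_boot all_order all_algebra.
From mathcomp Require Import reals.
Set Implicit Arguments. Unset Strict Implicit. Unset Printing Implicit Defensive.
Import Order.TTheory GRing.Theory Num.Theory.
Local Open Scope ring_scope.

Section BDF3.
Variable R : realType.

Definition Re_fun (x : R) : R :=
  10 / (7 * (x + 1)) - x ^+ 2 * Num.sqrt x / (x ^+ 2 + x + 1).

Definition d0 (x y : R) : R := (1 + 2 * x) / (1 + x) + x * y / (1 + y + x * y).
Definition d1 (x y : R) : R :=
  - (x / (1 + x)) - x * y / (1 + y + x * y)
  - x * y ^+ 2 / (1 + y + x * y) * ((1 + x) / (1 + y)).
Definition d2 (x y : R) : R := x * y ^+ 2 / (1 + y + x * y) * ((1 + x) / (1 + y)).

Definition dj (j : nat) (x y : R) : R :=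
  match j with 0 => d0 x y | 1 => d1 x y | 2 => d2 x y | _ => 0 end.

Definition step_ratio (tau : nat -> R) (k : nat) : R := tau k / tau k.-1.

Definition bdf3_kernel (tau : nat -> R) (k j : nat) : R :=
  dj j (step_ratio tau k) (step_ratio tau k.-1).

End BDF3.

From HB Require Import structures.
From mathcomp Require Import all_boot all_order all_algebra.
From mathcomp Require Import reals ring lra zify.
Set Implicit Arguments. Unset Strict Implicit. Unset Printing Implicit Defensive.
Import Order.TTheory GRing.Theory Num.Theory.
Local Open Scope ring_scope.

(* Discrete energy argument.  Put E_k = tau_k g(xi_k, xi_(k-1)) with the positive definite
   form g(a, b) = 15/8 a^2 - 6/5 a b + 1/2 b^2, and xi_j = 0 for j < 3.  When r_k and r_(k-1)
   lie in (0, 3/2], the k-th term of the left-hand side minus tau_k xi_k^2 / 50 is at least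
   E_k - E_(k-1): after dividing by tau_(k-1) this is the positivity of a quadratic form in
   (xi_k, xi_(k-1), xi_(k-2)), which by Schur complements reduces to a polynomial inequality
   in (r_k, r_(k-1)) on [0, 3/2]^2, certified by a Bernstein expansion with nonnegative
   coefficients.  Summing telescopes to E_n - E_2 = E_n >= 0.  The ratio bound applies since
   R_e < 3/2: the function defining R_e is negative on [3/2, oo). *)

Section ThreeVariableQuadraticForm.
Variable R : realDomainType.

Lemma quadratic_form3_ge0 (A B C D E G z w v : R) :
  0 < G -> 0 < D * G - E ^+ 2 ->
  0 <= (A * G - C ^+ 2) * (D * G - E ^+ 2) - (B * G - C * E) ^+ 2 ->
  0 <= A * z ^+ 2 + 2 * B * z * w + 2 * C * z * v + D * w ^+ 2 + 2 * E * w * v + G * v ^+ 2.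
Proof.
move=> G_gt0 minor_gt0 schur_ge0.
have sos : G * (D * G - E ^+ 2) *
    (A * z ^+ 2 + 2 * B * z * w + 2 * C * z * v + D * w ^+ 2 + 2 * E * w * v + G * v ^+ 2)
  = (D * G - E ^+ 2) * (G * v + C * z + E * w) ^+ 2
    + ((D * G - E ^+ 2) * w + (B * G - C * E) * z) ^+ 2
    + ((A * G - C ^+ 2) * (D * G - E ^+ 2) - (B * G - C * E) ^+ 2) * z ^+ 2.
  by ring.
rewrite -(pmulr_rge0 _ (mulr_gt0 G_gt0 minor_gt0)) sos.
by rewrite !addr_ge0 ?sqr_ge0 // mulr_ge0 ?sqr_ge0 // ltW.
Qed.

End ThreeVariableQuadraticForm.

(* A numeral such as 15116544 in ring_scope is a cast of a unary nat, far too large to build;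
   big integer constants are therefore written by their base-1000 digits. *)
Section Base1000.
Variable R : numDomainType.

Definition base1000 (ds : seq nat) : R := foldl (fun acc d => acc * 1000 + d%:R) 0 ds.

Lemma base1000_ge0 ds : 0 <= base1000 ds.
Proof.
rewrite /base1000; elim/last_ind: ds => [|ds d IH] //.
by rewrite foldl_rcons addr_ge0 ?mulr_ge0.
Qed.

End Base1000.

Arguments base1000 {R} ds%_N.

Lemma Re_fun_lt0 (R : realType) (x : R) : 3/2 <= x -> Re_fun x < 0.
Proof.
move=> x_ge.
have sqrt_ge : 61/50 <= Num.sqrt x.
  have -> : 61/50 = Num.sqrt ((61/50) ^+ 2) :> R by rewrite sqrtr_sqr ger0_norm //; lra.
  by apply: ler_wsqrtr; lra.
have cubic_gt : 10 * (x ^+ 2 + x + 1) < 7 * (x + 1) * x ^+ 2 * (61/50).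
  have x_sq : 9/4 <= x ^+ 2 by nra.
  nra.
rewrite /Re_fun subr_lt0 ltr_pdivrMr; last lra.
rewrite mulrAC ltr_pdivlMr; last nra.
have : 0 <= 7 * (x + 1) * x ^+ 2 * (Num.sqrt x - 61/50) by rewrite !mulr_ge0 ?sqr_ge0 //; lra.
nra.
Qed.

Lemma Re_fun_root_lt (R : realType) (x : R) : Re_fun x = 0 -> x < 3/2.
Proof. by move=> root; rewrite ltNge; apply/negP => /Re_fun_lt0; rewrite root ltxx. Qed.

Section StepForm.
Variable R : realType.
Implicit Types x y z w v : R.

Definition bern_term (c x y : R) (i j : nat) : R :=
  c * ((2 * x) ^+ i * (3 - 2 * x) ^+ (8 - i) * (2 * y) ^+ j * (3 - 2 * y) ^+ (4 - j)).

Lemma bern_term_ge0 c x y i j :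
  0 <= c -> 0 <= x <= 3/2 -> 0 <= y <= 3/2 -> 0 <= bern_term c x y i j.
Proof.
move=> c_ge0 /andP[x_ge0 x_le] /andP[y_ge0 y_le].
by rewrite /bern_term !mulr_ge0 ?exprn_ge0 //; lra.
Qed.

(* Numerator of the Schur-complement determinant of the quadratic form of step_form_ge0. *)
Definition step_det_num x y : R :=
  base1000 [:: 4; 851] + base1000 [:: 19; 404] * y + base1000 [:: 29; 106] * y ^+ 2
    + base1000 [:: 19; 404] * y ^+ 3 + base1000 [:: 4; 851] * y ^+ 4
  + base1000 [:: 85; 602] * x + base1000 [:: 444; 510] * x * y
    + base1000 [:: 819; 918] * x * y ^+ 2 + base1000 [:: 648; 714] * x * y ^+ 3
    + base1000 [:: 187; 704] * x * y ^+ 4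
  + base1000 [:: 72; 251] * x ^+ 2 + base1000 [:: 653; 8] * x ^+ 2 * y
    + base1000 [:: 1; 613; 169] * x ^+ 2 * y ^+ 2
    + base1000 [:: 1; 556; 318] * x ^+ 2 * y ^+ 3
    + base1000 [:: 523; 906] * x ^+ 2 * y ^+ 4
  - base1000 [:: 48; 500] * x ^+ 3 - base1000 [:: 21; 98] * x ^+ 3 * y
    + base1000 [:: 453; 308] * x ^+ 3 * y ^+ 2 + base1000 [:: 782; 310] * x ^+ 3 * y ^+ 3
    + base1000 [:: 262; 404] * x ^+ 3 * y ^+ 4
  - base1000 [:: 169; 0] * x ^+ 4 * y - base1000 [:: 483; 149] * x ^+ 4 * y ^+ 2
    - base1000 [:: 424; 98] * x ^+ 4 * y ^+ 3 - base1000 [:: 445; 949] * x ^+ 4 * y ^+ 4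
  - base1000 [:: 154; 100] * x ^+ 5 * y ^+ 2 - base1000 [:: 257; 0] * x ^+ 5 * y ^+ 3
    - base1000 [:: 506; 900] * x ^+ 5 * y ^+ 4
  + base1000 [:: 22; 400] * x ^+ 6 * y ^+ 3 - base1000 [:: 113; 600] * x ^+ 6 * y ^+ 4
  + base1000 [:: 66; 0] * x ^+ 7 * y ^+ 4
  + base1000 [:: 40; 0] * x ^+ 8 * y ^+ 4.

Lemma step_det_num_bernstein x y :
  base1000 [:: 15; 116; 544] * step_det_num x y =
  bern_term (base1000 [:: 137; 984]) x y 0 0 +
  bern_term (base1000 [:: 1; 379; 840]) x y 0 1 +
  bern_term (base1000 [:: 5; 174; 400]) x y 0 2 +
  bern_term (base1000 [:: 8; 624; 0]) x y 0 3 +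
  bern_term (base1000 [:: 5; 390; 0]) x y 0 4 +
  bern_term (base1000 [:: 4; 756; 224]) x y 1 0 +
  bern_term (base1000 [:: 54; 96; 768]) x y 1 1 +
  bern_term (base1000 [:: 227; 367; 360]) x y 1 2 +
  bern_term (base1000 [:: 419; 786; 400]) x y 1 3 +
  bern_term (base1000 [:: 287; 892; 0]) x y 1 4 +
  bern_term (base1000 [:: 34; 54; 80]) x y 2 0 +
  bern_term (base1000 [:: 421; 226; 880]) x y 2 1 +
  bern_term (base1000 [:: 1; 894; 795; 344]) x y 2 2 +
  bern_term (base1000 [:: 3; 704; 352; 720]) x y 2 3 +
  bern_term (base1000 [:: 2; 669; 843; 400]) x y 2 4 +
  bern_term (base1000 [:: 107; 514; 880]) x y 3 0 +
  bern_term (base1000 [:: 1; 446; 938; 80]) x y 3 1 +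
  bern_term (base1000 [:: 6; 944; 688; 96]) x y 3 2 +
  bern_term (base1000 [:: 14; 315; 105; 80]) x y 3 3 +
  bern_term (base1000 [:: 10; 746; 385; 600]) x y 3 4 +
  bern_term (base1000 [:: 183; 572; 160]) x y 4 0 +
  bern_term (base1000 [:: 2; 676; 581; 280]) x y 4 1 +
  bern_term (base1000 [:: 13; 631; 107; 644]) x y 4 2 +
  bern_term (base1000 [:: 29; 470; 374; 420]) x y 4 3 +
  bern_term (base1000 [:: 22; 658; 944; 275]) x y 4 4 +
  bern_term (base1000 [:: 181; 480; 704]) x y 5 0 +
  bern_term (base1000 [:: 2; 845; 366; 80]) x y 5 1 +
  bern_term (base1000 [:: 15; 230; 472; 696]) x y 5 2 +
  bern_term (base1000 [:: 34; 270; 783; 80]) x y 5 3 +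
  bern_term (base1000 [:: 25; 977; 868; 350]) x y 5 4 +
  bern_term (base1000 [:: 103; 363; 904]) x y 6 0 +
  bern_term (base1000 [:: 1; 724; 984; 768]) x y 6 1 +
  bern_term (base1000 [:: 9; 559; 554; 384]) x y 6 2 +
  bern_term (base1000 [:: 22; 174; 399; 520]) x y 6 3 +
  bern_term (base1000 [:: 15; 129; 118; 400]) x y 6 4 +
  bern_term (base1000 [:: 31; 134; 720]) x y 7 0 +
  bern_term (base1000 [:: 545; 228; 640]) x y 7 1 +
  bern_term (base1000 [:: 3; 47; 276; 520]) x y 7 2 +
  bern_term (base1000 [:: 7; 199; 25; 600]) x y 7 3 +
  bern_term (base1000 [:: 3; 437; 802; 0]) x y 7 4 +
  bern_term (base1000 [:: 3; 758; 400]) x y 8 0 +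
  bern_term (base1000 [:: 67; 456; 800]) x y 8 1 +
  bern_term (base1000 [:: 359; 172; 900]) x y 8 2 +
  bern_term (base1000 [:: 846; 949; 500]) x y 8 3 +
  bern_term (base1000 [:: 134; 274; 375]) x y 8 4.
Proof. by rewrite /step_det_num /bern_term /base1000 /=; ring. Qed.

Lemma step_det_num_ge0 x y : 0 <= x <= 3/2 -> 0 <= y <= 3/2 -> 0 <= step_det_num x y.
Proof.
move=> x_range y_range.
have scale_gt0 : 0 < base1000 [:: 15; 116; 544] :> R by rewrite /base1000 /=; lra.
rewrite -(pmulr_rge0 _ scale_gt0) step_det_num_bernstein.
by rewrite !addr_ge0 // bern_term_ge0 // base1000_ge0.
Qed.

Definition energy (a b : R) : R := 15/8 * a ^+ 2 - 6/5 * a * b + 1/2 * b ^+ 2.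

Lemma energy_ge0 a b : 0 <= energy a b.
Proof.
have -> : energy a b = 1/2 * (b - 6/5 * a) ^+ 2 + 231/200 * a ^+ 2 by rewrite /energy; field.
by apply: addr_ge0; apply: mulr_ge0; rewrite ?sqr_ge0 //; lra.
Qed.

Lemma step_form_ge0 x y z w v : 0 < x <= 3/2 -> 0 < y <= 3/2 ->
  0 <= x * (2 * z * (d0 x y * z + d1 x y * w + d2 x y * v) - 1/50 * z ^+ 2 - energy z w)
       + energy w v.
Proof.
move=> /andP[x_gt0 x_le] /andP[y_gt0 y_le].
have denom_gt0 : 0 < (1 + x) * (1 + y) * (1 + y + x * y) by rewrite !mulr_gt0 //; nra.
have -> : x * (2 * z * (d0 x y * z + d1 x y * w + d2 x y * v) - 1/50 * z ^+ 2 - energy z w)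
          + energy w v =
    x * (2 * d0 x y - 1/50 - 15/8) * z ^+ 2 + 2 * (x * (d1 x y + 3/5)) * z * w
    + 2 * (x * d2 x y) * z * v + (15/8 - x/2) * w ^+ 2 + 2 * (-3/5) * w * v + 1/2 * v ^+ 2.
  by rewrite /energy; field.
apply: quadratic_form3_ge0; [lra | lra |].
have -> : ((x * (2 * d0 x y - 1/50 - 15/8)) * (1/2) - (x * d2 x y) ^+ 2)
            * ((15/8 - x/2) * (1/2) - (-3/5) ^+ 2)
          - ((x * (d1 x y + 3/5)) * (1/2) - (x * d2 x y) * (-3/5)) ^+ 2
        = x * step_det_num x y / (400 * ((1 + x) * (1 + y) * (1 + y + x * y))) ^+ 2.
  rewrite /step_det_num /base1000 /d0 /d1 /d2 /=; field.
  by rewrite !gt_eqF //; nra.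
by rewrite divr_ge0 ?sqr_ge0 // mulr_ge0 ?step_det_num_ge0 //; lra.
Qed.

Lemma step_energy_le x y t z w v : 0 < x <= 3/2 -> 0 < y <= 3/2 -> 0 <= t ->
  x * t * energy z w - t * energy w v <=
  2 * (z * (x * t * (d0 x y * z + d1 x y * w + d2 x y * v))) - 1/50 * (x * t * z ^+ 2).
Proof.
move=> x_range y_range t_ge0; rewrite -subr_ge0.
have -> : 2 * (z * (x * t * (d0 x y * z + d1 x y * w + d2 x y * v))) - 1/50 * (x * t * z ^+ 2)
          - (x * t * energy z w - t * energy w v) =
    t * (x * (2 * z * (d0 x y * z + d1 x y * w + d2 x y * v) - 1/50 * z ^+ 2 - energy z w)
         + energy w v).
  by field.
by rewrite mulr_ge0 ?step_form_ge0.
Qed.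

End StepForm.

Section Convolution.
Variable R : realType.
Implicit Types tau xi : nat -> R.

Definition from3 (u : nat -> R) (j : nat) : R := if (3 <= j)%N then u j else 0.

Lemma bdf3_conv_sum tau xi k : (3 <= k)%N ->
  \sum_(3 <= j < k.+1) tau k * bdf3_kernel tau k (k - j) * xi j =
  tau k * (d0 (step_ratio tau k) (step_ratio tau k.-1) * xi k
         + d1 (step_ratio tau k) (step_ratio tau k.-1) * from3 xi k.-1
         + d2 (step_ratio tau k) (step_ratio tau k.-1) * from3 xi k.-2).
Proof.
case: k => [|[|[|k]]] // _.
set F := fun j => tau k.+3 * bdf3_kernel tau k.+3 (k.+3 - j).
have -> : \sum_(3 <= j < k.+4) F j * xi j = \sum_(0 <= j < k.+4) F j * from3 xi j.
  rewrite [RHS](big_cat_nat _ (n := 3)) //= [X in _ = X + _]big1_seq ?add0r; last first.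
    by move=> j; rewrite mem_iota /from3 => j_lt3; rewrite ifF ?mulr0 //; lia.
  by apply: eq_big_nat => j /andP[j_ge3 _]; rewrite /from3 j_ge3.
rewrite 3?big_nat_recr // big1_seq /=; last first.
  move=> j; rewrite mem_iota => j_lt.
  by rewrite /F /bdf3_kernel (_ : k.+3 - j = (k - j).+3)%N ?mulr0 ?mul0r //; lia.
rewrite /F /bdf3_kernel subnn add0r.
have -> : (k.+3 - k.+1 = 2)%N by lia.
have -> : (k.+3 - k.+2 = 1)%N by lia.
rewrite /from3 /=; ring.
Qed.

End Convolution.

Section EnergyEstimate.
Variables (R : realType) (tau xi : nat -> R).
Hypothesis tau_gt0 : forall k, (1 <= k)%N -> 0 < tau k.
Hypothesis step_ratio_range : forall k, (2 <= k)%N -> 0 < step_ratio tau k <= 3/2.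

Definition bdf3_energy (k : nat) : R := tau k * energy (from3 xi k) (from3 xi k.-1).

Lemma bdf3_energy_step k : (3 <= k)%N ->
  bdf3_energy k - bdf3_energy k.-1 <=
  2 * (xi k * \sum_(3 <= j < k.+1) tau k * bdf3_kernel tau k (k - j) * xi j)
  - 1/50 * (tau k * xi k ^+ 2).
Proof.
move=> k_ge3; rewrite bdf3_conv_sum //.
have tau_prev_gt0 : 0 < tau k.-1 by apply: tau_gt0; lia.
have tau_k : tau k = step_ratio tau k * tau k.-1 by rewrite /step_ratio divfK ?gt_eqF.
rewrite /bdf3_energy tau_k (_ : from3 xi k = xi k); last by rewrite /from3 k_ge3.
by rewrite step_energy_le ?step_ratio_range ?ltW //; lia.
Qed.

End EnergyEstimate.

Theorem lemma3p2 (R : realType) (Re : R)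
  (HRe_pos : 0 < Re) (HRe_root : Re_fun Re = 0)
  (HRe_unique : forall x : R, 0 < x -> Re_fun x = 0 -> x = Re)
  (tau : nat -> R)
  (Htau : forall k : nat, (1 <= k)%N -> 0 < tau k)
  (Hr : forall k : nat, (2 <= k)%N -> 0 < step_ratio tau k /\ step_ratio tau k < Re)
  (n : nat) (Hn : (3 <= n)%N) (xi : nat -> R) :
  2 * \sum_(3 <= k < n.+1) (xi k * \sum_(3 <= j < k.+1) tau k * bdf3_kernel tau k (k - j) * xi j)
  >= 1 / 50 * \sum_(3 <= k < n.+1) tau k * xi k ^+ 2.
Proof.
have Re_lt := Re_fun_root_lt HRe_root.
have ratio_range k : (2 <= k)%N -> 0 < step_ratio tau k <= 3/2.
  by move=> /Hr[r_gt0 r_lt]; rewrite r_gt0 /=; lra.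
rewrite -subr_ge0 !mulr_sumr -sumrB.
apply: le_trans (ler_sum_nat _) => [|k /andP[k_ge3 _]]; last exact: bdf3_energy_step.
rewrite big_add1 /= telescope_sumr; last lia.
have -> : bdf3_energy tau xi 2 = 0 by rewrite /bdf3_energy /from3 /energy /=; ring.
by rewrite subr0 mulr_ge0 ?energy_ge0 // ltW // Htau; lia.
Qed.
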